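(* Let $\Gamma$ be the triangle graph (three vertices, three edges $e_1,e_2,e_3$, pairwise joining the vertices) with constant magnetic field, i.e. vertex weight $\omega\equiv 1$ on each vertex, so that its $\mathbf{V}$-polynomial is $$x_1^3+(t_{e_1}+t_{e_2}+t_{e_3})x_2x_1+(t_{e_1}t_{e_2}+t_{e_2}t_{e_3}+t_{e_1}t_{e_3}+t_{e_1}t_{e_2}t_{e_3})x_3$$ in the variables $x_1,x_2,x_3,t_{e_1},t_{e_2},t_{e_3}$. Then the affine hypersurface in $\mathbb{A}^6$ defined by the vanishing of this polynomial is not polynomially countable.
   Context: For a graph $\Gamma$ with vertex weight $\omega:V(\Gamma)\to S$, the $\mathbf{V}$-polynomial is $\mathbf{V}_\Gamma(t,x)=\sum_{A\subseteq E(\Gamma)}\prod_{j}x_{s_j}\prod_{e\in A}t_e$, where the product over $j$ runs over the connected components of the spanning subgraph with edge set $A$ and $s_j$ is the sum of the weights of the vertices of the $j$-th component. A hypersurface defined by a polynomial with integer coefficients is polynomially countable if for every prime $p$ and every power $q=p^r$, the number $N(q)$ of its $\mathbb{F}_q$-points (solutions in $\mathbb{F}_q$ of the reduced equation) is given by a polynomial in $q$ with integer coefficients. *)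

From HB Require Import structures.
From mathcomp Require Import all_boot all_order all_algebra all_field.
Set Implicit Arguments. Unset Strict Implicit. Unset Printing Implicit Defensive.
Import GRing.Theory.
Local Open Scope ring_scope.

(* V-polynomial of the triangle graph with constant magnetic field (omega = 1),
   evaluated in a commutative ring R; integer coefficients (all equal to 1) are
   reduced into R, i.e. this is the "reduced equation" over F_q when R = F_q. *)
Definition Vtriangle (R : comNzRingType) (x1 x2 x3 t1 t2 t3 : R) : R :=
  x1 ^+ 3 + (t1 + t2 + t3) * x2 * x1
  + (t1 * t2 + t2 * t3 + t1 * t3 + t1 * t2 * t3) * x3.

Definition NVtriangle (F : finFieldType) : nat :=
  #|[pred v : F * F * F * F * F * F |
      let: (x1, x2, x3, t1, t2, t3) := v in Vtriangle x1 x2 x3 t1 t2 t3 == 0]|.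

(* Polynomial countability of this hypersurface: there is Q in Z[X] with
   N(q) = Q(q) for every finite field F_q (every prime power q = p^r is the
   order of a finite field, unique up to isomorphism). *)
Definition Vtriangle_polynomially_countable : Prop :=
  exists Q : {poly int}, forall F : finFieldType,
    (NVtriangle F)%:Z = Q.[(#|F|)%:Z].

From mathcomp Require Import all_boot all_order all_algebra all_field.
Set Implicit Arguments. Unset Strict Implicit. Unset Printing Implicit Defensive.
Import GRing.Theory.
Local Open Scope ring_scope.

(* For an integer polynomial Q and integers a, b, the difference b - a divides
   Q(b) - Q(a).  Over a prime field F_p, points of the hypersurface are tuples of
   residues 0..p-1 at which p divides the integer value of the V-polynomial, so
   N(3) = 297 and N(7) = 18739 can be computed.  Were N(q) = Q(q), then 4 = 7 - 3
   would divide 18739 - 297 = 18442, which is 2 mod 4. *)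

Lemma dvdz_hornerB (Q : {poly int}) (a b : int) : (b - a %| Q.[b] - Q.[a])%Z.
Proof.
have /factor_theorem[q def_Q] : root (Q - Q.[a]%:P) a.
  by rewrite /root !hornerE subrr.
apply/dvdzP; exists q.[b].
by have := congr1 (horner^~ b) def_Q; rewrite !hornerE.
Qed.

Lemma big_prod_curry (R : Type) (idx : R) (op : Monoid.com_law idx)
    (I J : finType) (F : I * J -> R) :
  \big[op/idx]_(v : I * J) F v = \big[op/idx]_(i : I) \big[op/idx]_(j : J) F (i, j).
Proof. by rewrite pair_bigA; apply: eq_bigr => -[]. Qed.

Lemma sum_Fp p (F : 'F_p -> nat) : prime p ->
  (\sum_(x : 'F_p) F x = \sum_(0 <= i < p) F i%:R)%N.
Proof.
move=> p_pr; transitivity (\sum_(0 <= i < (Zp_trunc (pdiv p)).+2) F i%:R)%N.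
  by rewrite big_mkord; apply: eq_bigr => x _; rewrite natr_Zp.
by rewrite (Fp_cast p_pr).
Qed.

Lemma rmorph_Vtriangle (R S : comNzRingType) (f : {rmorphism R -> S})
    (x1 x2 x3 t1 t2 t3 : R) :
  f (Vtriangle x1 x2 x3 t1 t2 t3)
  = Vtriangle (f x1) (f x2) (f x3) (f t1) (f t2) (f t3).
Proof. by rewrite /Vtriangle !(rmorphXn, rmorphD, rmorphM). Qed.

Lemma Vtriangle_Fp_eq0 p (x1 x2 x3 t1 t2 t3 : int) : prime p ->
  (Vtriangle (x1%:~R : 'F_p) x2%:~R x3%:~R t1%:~R t2%:~R t3%:~R == 0)
  = (p %| Vtriangle x1 x2 x3 t1 t2 t3)%Z.
Proof.
move=> p_pr; rewrite (dvdz_pcharf (pchar_Fp p_pr)).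
by rewrite -(rmorph_Vtriangle ( *~%R 1 : {rmorphism int -> 'F_p})).
Qed.

Definition count_Vtriangle_mod (p : nat) : nat :=
  \sum_(0 <= x1 < p) \sum_(0 <= x2 < p) \sum_(0 <= x3 < p)
  \sum_(0 <= t1 < p) \sum_(0 <= t2 < p) \sum_(0 <= t3 < p)
    (p %| Vtriangle x1%:Z x2%:Z x3%:Z t1%:Z t2%:Z t3%:Z)%Z.

Lemma NVtriangle_Fp p : prime p ->
  NVtriangle [the finFieldType of 'F_p] = count_Vtriangle_mod p.
Proof.
move=> p_pr; rewrite /NVtriangle -sum1_card big_mkcond /= !big_prod_curry.
do 6![rewrite sum_Fp //; apply: eq_bigr => ? _].
by rewrite inE /= !pmulrn Vtriangle_Fp_eq0.
Qed.

Lemma count_Vtriangle_mod3 : count_Vtriangle_mod 3 = 297%N.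
Proof. by rewrite /count_Vtriangle_mod !unlock; vm_compute. Qed.

Lemma count_Vtriangle_mod7 : count_Vtriangle_mod 7 = 18739%N.
Proof. by rewrite /count_Vtriangle_mod !unlock; vm_compute. Qed.

Theorem theorem3p2 : ~ Vtriangle_polynomially_countable.
Proof.
move=> [Q NQ].
have N3 := NQ [the finFieldType of 'F_3].
have N7 := NQ [the finFieldType of 'F_7].
rewrite NVtriangle_Fp // count_Vtriangle_mod3 card_Fp // in N3.
rewrite NVtriangle_Fp // count_Vtriangle_mod7 card_Fp // in N7.
by have := dvdz_hornerB Q 3 7; rewrite -N3 -N7.
Qed.
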